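(* Let $(\Omega,S)$ be a scheme such that for every $\alpha\in\Omega$ the $\alpha$-extension $(\Omega,S_\alpha)$ is semiregular on $\Omega\setminus\{\alpha\}$ and its fibers are exactly the sets $\alpha s$, $s\in S$. Then $(\Omega,S)$ is a regular scheme or a Frobenius scheme.
   Context: A coherent configuration is a pair $(\Omega,S)$ with $\Omega$ finite and $S$ a partition of $\Omega\times\Omega$ such that the diagonal $1_\Omega$ is a union of elements of $S$, $S$ is closed under transposition, and for $r,s,t\in S$ the number $c_{rs}^t=|\{\beta:(\alpha,\beta)\in r,(\beta,\gamma)\in s\}|$ does not depend on $(\alpha,\gamma)\in t$. A scheme is one with $1_\Omega\in S$; $\alpha s=\{\beta:(\alpha,\beta)\in s\}$. A coherent configuration is semiregular if $|\alpha s|\le 1$ for all $\alpha,s$; a semiregular scheme is called regular. Fibers of $(\Omega,T)$ are sets $\Delta$ with $1_\Delta\in T$. The $\alpha$-extension $(\Omega,S_\alpha)$ is the coarsest coherent configuration on $\Omega$ such that $\{(\alpha,\alpha)\}$ and every $s\in S$ are unions of its basis relations; it is semiregular on $\Omega\setminus\{\alpha\}$ if $|\beta s|\le1$ for all $\beta\ne\alpha$ and $s\in S_\alpha$ with $s\subseteq(\Omega\setminus\{\alpha\})^2$. A Frobenius group is a non-regular transitive permutation group in which only the identity fixes two distinct points; a Frobenius scheme is the scheme (set of orbits on $\Omega\times\Omega$) of a Frobenius group. *)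

From mathcomp Require Import all_boot all_order all_fingroup.
Set Implicit Arguments. Unset Strict Implicit. Unset Printing Implicit Defensive.

Section CC.
Variable T : finType.

Definition diag (D : {set T}) : {set T * T} :=
  [set p | (p.1 == p.2) && (p.1 \in D)].

Definition transp (s : {set T * T}) : {set T * T} :=
  [set p | (p.2, p.1) \in s].

Definition nbhd (a : T) (s : {set T * T}) : {set T} := [set b | (a, b) \in s].

Definition is_union (S : {set {set T * T}}) (r : {set T * T}) : Prop :=
  exists2 U : {set {set T * T}}, U \subset S & cover U = r.

Definition coherent (S : {set {set T * T}}) : Prop :=
  [/\ partition S [set: T * T],
      is_union S (diag [set: T]),
      (forall s, s \in S -> transp s \in S) &
      (forall r s t, r \in S -> s \in S -> t \in S ->
         forall a c a' c', (a, c) \in t -> (a', c') \in t ->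
           #|[set b | ((a, b) \in r) && ((b, c) \in s)]| =
           #|[set b | ((a', b) \in r) && ((b, c') \in s)]|)].

Definition scheme (S : {set {set T * T}}) : Prop :=
  coherent S /\ diag [set: T] \in S.

Definition semiregular (S : {set {set T * T}}) : Prop :=
  forall a s, s \in S -> #|nbhd a s| <= 1.

Definition regular_scheme (S : {set {set T * T}}) : Prop :=
  scheme S /\ semiregular S.

Definition refines (R S : {set {set T * T}}) : Prop :=
  forall s, s \in S -> is_union R s.

Definition alpha_extension (S : {set {set T * T}}) (a : T)
    (R : {set {set T * T}}) : Prop :=
  [/\ coherent R, refines R S, is_union R [set (a, a)] &
      forall R', coherent R' -> refines R' S -> is_union R' [set (a, a)] ->
        refines R' R].

Definition semiregular_off (R : {set {set T * T}}) (a : T) : Prop :=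
  forall b s, b != a -> s \in R ->
    s \subset [set p | (p.1 != a) && (p.2 != a)] -> #|nbhd b s| <= 1.

Definition fibers (R : {set {set T * T}}) : {set {set T}} :=
  [set D : {set T} | diag D \in R].

Definition frobenius_group (G : {group {perm T}}) : Prop :=
  [/\ [transitive G, on [set: T] | 'P],
      (exists2 g, g \in G & g != 1%g /\ exists x, g x = x) &
      (forall g x y, g \in G -> x != y -> g x = x -> g y = y -> g = 1%g)].

Definition orbitals (G : {group {perm T}}) : {set {set T * T}} :=
  [set [set ((g : {perm T}) p.1, g p.2) | g in G] | p : T * T].

Definition frobenius_scheme (S : {set {set T * T}}) : Prop :=
  exists G : {group {perm T}}, frobenius_group G /\ S = orbitals G.

End CC.

(* The alpha-extension is computed by Weisfeiler-Leman refinement of S with the loop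
   (alpha, alpha) individualized. Semiregularity off alpha makes (c, w) ~ (c, w') with
   c <> alpha force w = w'; the fiber condition gives (x, x) ~ (y, y) whenever x, y lie in the
   same alpha s. Together they make z |-> (the unique w with (x, z) ~ (y, w)) an automorphism
   of S fixing alpha and sending x to y, while an automorphism fixing alpha and another point is
   trivial. If all valencies are at most 1 the scheme is regular. Otherwise every point
   stabilizer of Aut(S) has the same order k > 1 and only the identity fixes two points, so
   counting the nonidentity elements with a fixed point shows that Aut(S) is transitive; its
   orbitals are then exactly the relations of S. *)

From mathcomp Require Import all_boot all_order all_fingroup.
From mathcomp Require Import zify.
Set Implicit Arguments. Unset Strict Implicit. Unset Printing Implicit Defensive.

Section PartitionOfType.
Variables (U : finType) (P : {set {set U}}).
Hypothesis partP : partition P [set: U].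

Lemma pblock_refl x : x \in pblock P x.
Proof. by case/and3P: partP => /eqP coverP _ _; rewrite mem_pblock coverP inE. Qed.

Lemma pblock_in x : pblock P x \in P.
Proof. by case/and3P: partP => /eqP coverP _ _; rewrite pblock_mem ?coverP ?inE. Qed.

Lemma pblock_of B x : B \in P -> x \in B -> pblock P x = B.
Proof. by case/and3P: partP => _ tP _; apply: def_pblock. Qed.

Lemma pblock_sym x y : y \in pblock P x -> x \in pblock P y.
Proof. by move=> yx; rewrite (pblock_of (pblock_in x) yx) pblock_refl. Qed.

End PartitionOfType.

Lemma card_set_sum (U : finType) (B : pred U) : #|[set z | B z]| = \sum_z B z.
Proof. by rewrite -sum1_card big_mkcond /=; apply: eq_bigr => z _; rewrite inE; case: (B z). Qed.

Section Unions.
Variables (T : finType) (P : {set {set T * T}}).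
Hypothesis partP : partition P [set: T * T].

Lemma is_unionP X :
  is_union P X <-> (forall p q, q \in pblock P p -> p \in X -> q \in X).
Proof.
split=> [[V sVP <-] p q qp /bigcupP[B BV pB]|closedX].
  by apply/bigcupP; exists B; rewrite // -(pblock_of partP (subsetP sVP B BV) pB).
exists [set B in P | B \subset X]; first by apply/subsetP => B; rewrite inE => /andP[].
apply/setP => p; apply/bigcupP/idP => [[B]|pX].
  by rewrite inE => /andP[_ /subsetP]; apply.
exists (pblock P p); last exact: pblock_refl.
rewrite inE pblock_in //; apply/subsetP => q qp; exact: closedX qp pX.
Qed.

Lemma sum_blocks_sub X p : is_union P X ->
  \sum_(r in P | r \subset X) (p \in r : nat) = (p \in X : nat).
Proof.
move=> /is_unionP closedX; case pX: (p \in X).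
  have pX_sub : pblock P p \subset X by apply/subsetP => q /closedX; apply.
  rewrite (bigD1 (pblock P p)) /=; last by rewrite pblock_in.
  rewrite pblock_refl // big1 // => r /andP[/andP[rP _] rp].
  by apply/eqP; rewrite eqb0; apply: contra rp => /(pblock_of partP rP) ->.
rewrite big1 // => r /andP[rP /subsetP rX]; apply/eqP; rewrite eqb0.
by apply: contraFN pX => /rX.
Qed.

Lemma card_paths_sum X Y a c : is_union P X -> is_union P Y ->
  #|[set z | ((a, z) \in X) && ((z, c) \in Y)]| =
  \sum_(r in P | r \subset X) \sum_(s in P | s \subset Y)
     #|[set z | ((a, z) \in r) && ((z, c) \in s)]|.
Proof.
move=> unionX unionY; rewrite card_set_sum.
under eq_bigr => z _ do rewrite -mulnb -(sum_blocks_sub (a, z) unionX)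
  -(sum_blocks_sub (z, c) unionY) big_distrl /=.
rewrite exchange_big /=; apply: eq_bigr => r _.
under eq_bigr => z _ do rewrite big_distrr /=.
rewrite exchange_big /=; apply: eq_bigr => s _.
by rewrite card_set_sum; apply: eq_bigr => z _; rewrite mulnb.
Qed.

End Unions.

Lemma coherent_card_paths (T : finType) (P : {set {set T * T}}) X Y a c a' c' :
  coherent P -> is_union P X -> is_union P Y -> (a', c') \in pblock P (a, c) ->
  #|[set z | ((a, z) \in X) && ((z, c) \in Y)]| =
  #|[set z | ((a', z) \in X) && ((z, c') \in Y)]|.
Proof.
case=> partP _ _ hcoh unionX unionY ac'.
rewrite !(card_paths_sum partP _ _ unionX unionY).
apply: eq_bigr => r /andP[rP _]; apply: eq_bigr => s /andP[sP _].
exact: hcoh rP sP (pblock_in partP (a, c)) _ _ _ _ (pblock_refl partP _) ac'.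
Qed.

Lemma iter_decreasing_stable (U : finType) (F : rel U -> rel U) (E : rel U) :
  (forall E' x y, F E' x y -> E' x y) ->
  exists n, forall x y, F (iter n F E) x y = iter n F E x y.
Proof.
move=> Fsub; pose graph n := [set xy : U * U | iter n F E xy.1 xy.2].
have graphS n : graph n.+1 \subset graph n.
  by apply/subsetP => -[x y]; rewrite !inE /= => /Fsub.
suff [n stable] : exists n, #|graph n.+1| = #|graph n|.
  exists n => x y; move/(subset_cardP stable): (graphS n) => /(_ (x, y)).
  by rewrite !inE.
have shrink m : (exists n, #|graph n.+1| = #|graph n|) \/ #|graph m| + m <= #|graph 0|.
  elim: m => [|m [ex|IH]]; [by right; rewrite addn0 | by left |].
  have [eq_m|ne_m] := eqVneq #|graph m.+1| #|graph m|; first by left; exists m.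
  have lt_m : #|graph m.+1| < #|graph m|.
    by rewrite ltn_neqAle ne_m subset_leq_card.
  by right; rewrite addnS (leq_trans _ IH) // ltn_add2r.
by case: (shrink (#|graph 0|).+1) => //; rewrite addnS ltnNge leq_addl.
Qed.

Section EquivalenceRel.
Variables (U : Type) (E : rel U).
Hypothesis eqE : equivalence_rel E.

Lemma equiv_refl x : E x x.
Proof. exact: (eqE x x x).1. Qed.

Lemma equiv_sym x y : E x y -> E y x.
Proof. by move=> xy; rewrite -((eqE x y x).2 xy) equiv_refl. Qed.

Lemma equiv_trans x y z : E x y -> E y z -> E x z.
Proof. by move=> xy; rewrite ((eqE x y z).2 xy). Qed.

Lemma equiv_rewr x y z : E y z -> E x y = E x z.
Proof.
move=> yz; apply/idP/idP => [xy|xz]; first exact: equiv_trans xy yz.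
exact: equiv_trans xz (equiv_sym yz).
Qed.

End EquivalenceRel.

Section Automorphisms.
Variables (T : finType) (S : {set {set T * T}}).

Definition cc_aut : {set {perm T}} :=
  [set g : {perm T} | [forall p, pblock S (g p.1, g p.2) == pblock S p]].

Lemma cc_autP g p : g \in cc_aut -> pblock S (g p.1, g p.2) = pblock S p.
Proof. by rewrite inE => /forallP /(_ p) /eqP. Qed.

Lemma cc_aut_group_set : group_set cc_aut.
Proof.
apply/group_setP; split=> [|g h autg auth].
  by rewrite inE; apply/forallP => p; rewrite !perm1 -surjective_pairing.
by rewrite inE; apply/forallP => p; rewrite !permM (cc_autP (g p.1, g p.2) auth) (cc_autP _ autg).
Qed.

Canonical cc_aut_group := Group cc_aut_group_set.

Lemma cc_aut_mem g s p : partition S [set: T * T] ->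
  g \in cc_aut -> s \in S -> p \in s -> (g p.1, g p.2) \in s.
Proof.
move=> partS autg sS ps; rewrite -(pblock_of partS sS ps) -(cc_autP _ autg).
exact: pblock_refl.
Qed.

End Automorphisms.

Section WeisfeilerLeman.
Variable T : finType.
Implicit Types (S R : {set {set T * T}}) (E : rel (T * T)) (p q x y : T * T).

Definition swap_pair p : T * T := (p.2, p.1).

(* Two-dimensional Weisfeiler-Leman refinement of the colouring by S in which the loop (b, b)
   gets a colour of its own; at a stable stage its classes form the b-extension. *)
Definition wl_init S (b : T) : rel (T * T) := fun p q =>
  (pblock S p == pblock S q) && ((p == (b, b)) == (q == (b, b))).

Definition wl_count E p x y := #|[set z | E x (p.1, z) && E y (z, p.2)]|.

Definition wl_step E : rel (T * T) := fun p q =>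
  [&& E p q, E (swap_pair p) (swap_pair q) &
      [forall x, forall y, wl_count E p x y == wl_count E q x y]].

Definition wl S b n := iter n wl_step (wl_init S b).

Lemma wl_countE E p x y : wl_count E p x y =
  #|[set z | ((p.1, z) \in [set r | E x r]) && ((z, p.2) \in [set r | E y r])]|.
Proof. by apply: eq_card => z; rewrite !inE. Qed.

Lemma wl_step_sub E p q : wl_step E p q -> E p q.
Proof. by case/andP. Qed.

Lemma wl_sub_init S b n p q : wl S b n p q -> wl_init S b p q.
Proof. by elim: n p q => //= n IH p q /wl_step_sub/IH. Qed.

Lemma wl_init_equiv S b : equivalence_rel (wl_init S b).
Proof. by move=> p q r; split; rewrite /wl_init ?eqxx // => /andP[/eqP-> /eqP->]. Qed.

Lemma wl_step_equiv E : equivalence_rel E -> equivalence_rel (wl_step E).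
Proof.
move=> eqE p q r; split.
  by rewrite /wl_step !equiv_refl //; apply/forallP => x; apply/forallP.
case/and3P=> pq spq /forallP count_pq.
have count_eq x y : wl_count E p x y = wl_count E q x y.
  by apply/eqP; move/forallP: (count_pq x).
rewrite /wl_step ((eqE _ _ r).2 pq) ((eqE _ _ (swap_pair r)).2 spq).
by under eq_forallb => x do under eq_forallb => y do rewrite count_eq.
Qed.

Lemma wl_equiv S b n : equivalence_rel (wl S b n).
Proof. by elim: n => [|n IH]; [apply: wl_init_equiv | apply: wl_step_equiv]. Qed.

Lemma wl_stabilizes S b : exists n, forall p q, wl_step (wl S b n) p q = wl S b n p q.
Proof. exact: iter_decreasing_stable wl_step_sub. Qed.

Lemma wl_coarsest S R b n p q : partition S [set: T * T] ->
  coherent R -> refines R S -> is_union R [set (b, b)] ->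
  q \in pblock R p -> wl S b n p q.
Proof.
move=> partS cohR refRS unionb; have [partR _ transpR _] := cohR.
elim: n p q => [|n IH] p q qp /=.
  apply/andP; split.
    have closedSp := (is_unionP partR _).1 (refRS _ (pblock_in partS p)).
    by rewrite (pblock_of partS (pblock_in partS p) (closedSp _ _ qp (pblock_refl partS p))).
  have closedb := (is_unionP partR _).1 unionb.
  apply/eqP; apply/idP/idP => /eqP eqb.
    by move: (closedb _ _ qp); rewrite eqb !inE eqxx => /(_ isT).
  by move: (closedb _ _ (pblock_sym partR qp)); rewrite eqb !inE eqxx => /(_ isT).
apply/and3P; split; first exact: IH.
  apply: IH; have spR : transp (pblock R p) \in R by apply/transpR/pblock_in.
  rewrite (pblock_of partR spR) ?inE /= -?surjective_pairing ?pblock_refl //.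
apply/forallP => x; apply/forallP => y; rewrite !wl_countE.
have unionE w : is_union R [set r | wl S b n w r].
  apply/(is_unionP partR) => r r' rr'; rewrite !inE => wr.
  exact: (equiv_trans (wl_equiv S b n) wr (IH r r' rr')).
apply/eqP; move: qp; case: p => a c; case: q => a' c' qp.
exact: coherent_card_paths cohR (unionE x) (unionE y) qp.
Qed.

Lemma wl_aut S b n g p :
  g \in cc_aut S -> g b = b -> wl S b n p (g p.1, g p.2).
Proof.
move=> autg gb; elim: n p => [|n IH] p /=.
  rewrite /wl_init (cc_autP _ autg) eqxx /=.
  by case: p => p1 p2; rewrite !xpair_eqE /= -{3 4}gb !(inj_eq perm_inj).
apply/and3P; split; [exact: IH | exact: (IH (swap_pair p)) |].
have eqE := wl_equiv S b n.
apply/forallP => x; apply/forallP => y; apply/eqP.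
rewrite /wl_count -(card_imset _ (@perm_inj _ g)); apply: eq_card => z /=.
rewrite -{1 2}(permKV g z) mem_imset ?inE; last exact: perm_inj.
by rewrite (equiv_rewr eqE _ (IH (p.1, g^-1 z)%g)) (equiv_rewr eqE _ (IH (g^-1 z, p.2)%g)).
Qed.

End WeisfeilerLeman.

Section Schemes.
Variables (T : finType) (S : {set {set T * T}}).
Hypothesis schS : scheme S.

Lemma scheme_partition : partition S [set: T * T].
Proof. by case: schS => [[]]. Qed.

Lemma scheme_diag : diag [set: T] \in S.
Proof. by case: schS. Qed.

Lemma scheme_diagE p : (p.1 == p.2) = (pblock S p == diag [set: T]).
Proof.
apply/idP/eqP => [pp|pdiag].
  by apply: (pblock_of scheme_partition scheme_diag); rewrite !inE pp.
by move: (pblock_refl scheme_partition p); rewrite pdiag !inE andbT.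
Qed.

Lemma scheme_diag_rel u a z : u \in S -> (a, a) \in u -> (a, z) \in u -> z = a.
Proof.
move=> uS aa az; have /eqP udiag : pblock S (a, a) == diag [set: T] by rewrite -scheme_diagE.
by move: az; rewrite -(pblock_of scheme_partition uS aa) udiag !inE andbT => /eqP.
Qed.

Lemma scheme_valency s a a' : s \in S -> #|nbhd a s| = #|nbhd a' s|.
Proof.
case: schS => -[_ _ transpS cohS] diagS sS.
have := cohS s (transp s) _ sS (transpS _ sS) diagS a a a' a'.
rewrite !inE !eqxx => /(_ isT isT) eq_paths.
transitivity #|[set z | ((a, z) \in s) && ((z, a) \in transp s)]|.
  by apply: eq_card => z; rewrite !inE andbb.
by rewrite eq_paths; apply: eq_card => z; rewrite !inE andbb.
Qed.

End Schemes.

Section StableRefinement.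
Variables (T : finType) (S : {set {set T * T}}) (b : T) (n : nat).
Hypothesis schS : scheme S.
Hypothesis stable : forall p q, wl_step (wl S b n) p q = wl S b n p q.
Implicit Types (p q : T * T).

Local Notation E := (wl S b n).
Local Notation partS := (scheme_partition schS).

Lemma wl_refl p : E p p. Proof. exact: (equiv_refl (wl_equiv S b n) p). Qed.
Lemma wl_sym p q : E p q -> E q p. Proof. exact: (equiv_sym (wl_equiv S b n)). Qed.
Lemma wl_trans p q r : E p q -> E q r -> E p r.
Proof. exact: (equiv_trans (wl_equiv S b n)). Qed.

Lemma wl_swap p q : E p q -> E (swap_pair p) (swap_pair q).
Proof. by rewrite -stable => /and3P[]. Qed.

Lemma wl_count_eq p q x y : E p q -> wl_count E p x y = wl_count E q x y.
Proof. by rewrite -stable => /and3P[_ _ /forallP /(_ x) /forallP /(_ y) /eqP]. Qed.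

Lemma wl_pblock p q : E p q -> pblock S p = pblock S q.
Proof. by move/wl_sub_init => /andP[/eqP]. Qed.

Lemma wl_diag p q : E p q -> (p.1 == p.2) = (q.1 == q.2).
Proof. by move/wl_pblock => pq; rewrite !(scheme_diagE schS) pq. Qed.

Lemma wl_bb q : E (b, b) q -> q = (b, b).
Proof. by move/wl_sub_init => /andP[_]; rewrite eqxx => /eqP/esym/eqP. Qed.

(* Count with the classes of [(p.1, z)] and [(z, p.2)] as colours: [z] itself is a witness for [p]. *)
Lemma wl_extend p q z : E p q -> exists w, E (p.1, z) (q.1, w) && E (z, p.2) (w, q.2).
Proof.
move=> pq; have := wl_count_eq (p.1, z) (z, p.2) pq; rewrite /wl_count => eq_count.
have /card_gt0P[w] : 0 < #|[set w | E (p.1, z) (q.1, w) && E (z, p.2) (w, q.2)]|.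
  by rewrite -eq_count; apply/card_gt0P; exists z; rewrite inE !wl_refl.
by rewrite inE; exists w.
Qed.

Lemma wl_fst p q : E p q -> E (p.1, p.1) (q.1, q.1).
Proof.
case/(wl_extend p.1) => w /andP[pw _].
have /eqP wq : q.1 == w by rewrite -(wl_diag pw) eqxx.
by rewrite {2}wq.
Qed.

Lemma wl_snd p q : E p q -> E (p.2, p.2) (q.2, q.2).
Proof.
case/(wl_extend p.2) => w /andP[_ pw].
have /eqP wq : w == q.2 by rewrite -(wl_diag pw) eqxx.
by rewrite -{1}wq.
Qed.

Lemma wl_fst_b p q : E p q -> (p.1 == b) = (q.1 == b).
Proof.
move=> pq; apply/eqP/eqP => [pb|qb].
  by move: (wl_fst pq); rewrite pb => /wl_bb [].
by move: (wl_fst (wl_sym pq)); rewrite qb => /wl_bb [].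
Qed.

Lemma wl_snd_b p q : E p q -> (p.2 == b) = (q.2 == b).
Proof.
move=> pq; apply/eqP/eqP => [pb|qb].
  by move: (wl_snd pq); rewrite pb => /wl_bb [].
by move: (wl_snd (wl_sym pq)); rewrite qb => /wl_bb [].
Qed.

Definition wl_classes := equivalence_partition E [set: T * T].

Lemma wl_classes_partition : partition wl_classes [set: T * T].
Proof. by apply: equivalence_partitionP => p q r _ _ _; apply: wl_equiv. Qed.

Lemma mem_pblock_wl p q : (q \in pblock wl_classes p) = E p q.
Proof. by rewrite pblock_equivalence_partition // => x y z _ _ _; apply: wl_equiv. Qed.

Lemma wl_classes_union (X : {set T * T}) :
  (forall p q, E p q -> p \in X -> q \in X) -> is_union wl_classes X.
Proof.
move=> closedX; apply/(is_unionP wl_classes_partition) => p q.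
by rewrite mem_pblock_wl; apply: closedX.
Qed.

Lemma wl_classP s : s \in wl_classes -> exists p, s = [set q | E p q].
Proof. by case/imsetP => p _ ->; exists p; apply/setP => q; rewrite !inE. Qed.

Lemma wl_alpha_extension : alpha_extension S b wl_classes.
Proof.
split.
- split; first exact: wl_classes_partition.
  + by apply: wl_classes_union => p q pq; rewrite !inE !andbT (wl_diag pq).
  + move=> s /wl_classP[p ->].
    have -> : transp [set q | E p q] = [set q | E (swap_pair p) q].
      apply/setP => q; rewrite !inE.
      by apply/idP/idP => /wl_swap; rewrite /swap_pair /= -!surjective_pairing.
    by apply/imsetP; exists (swap_pair p) => //; apply/setP => q; rewrite !inE.
  + move=> r s t /wl_classP[x ->] /wl_classP[y ->] /wl_classP[w ->] a c a' c'.
    rewrite !inE => wac wac'; have := wl_count_eq x y (wl_trans (wl_sym wac) wac').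
    by rewrite !wl_countE.
- move=> s sS; apply: wl_classes_union => p q /wl_pblock pq ps.
  by rewrite -(pblock_of partS sS ps) pq (pblock_refl partS).
- apply: wl_classes_union => p q pq; rewrite !inE => /eqP pb.
  by move: pq; rewrite pb => /wl_bb ->.
- move=> R cohR refRS unionb s /wl_classP[p ->]; have [partR _ _ _] := cohR.
  apply/(is_unionP partR) => q r rq; rewrite !inE => pq.
  exact: wl_trans pq (wl_coarsest n partS cohR refRS unionb rq).
Qed.

Hypothesis semiregular_classes : semiregular_off wl_classes b.
Hypothesis fibers_classes : fibers wl_classes = [set nbhd b s | s in S].

Lemma wl_row_inj c w w' : c != b -> E (c, w) (c, w') -> w = w'.
Proof.
move=> cb cww'; have [wb|wb] := eqVneq w b.
  by move: (wl_snd_b cww'); rewrite /= wb eqxx => /esym/eqP ->.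
set s := [set q | E (c, w) q].
have sR : s \in wl_classes by apply/imsetP; exists (c, w) => //; apply/setP => q; rewrite !inE.
have s_off_b : s \subset [set q | (q.1 != b) && (q.2 != b)].
  by apply/subsetP => q; rewrite !inE => cq; rewrite -(wl_fst_b cq) -(wl_snd_b cq) /= cb wb.
have /card_le1_eqP/(_ w' w) := semiregular_classes cb sR s_off_b.
by apply; rewrite !inE // wl_refl.
Qed.

Lemma wl_same_relation_diag u x y : u \in S -> (b, x) \in u -> (b, y) \in u ->
  E (x, x) (y, y).
Proof.
move=> uS bx byy; set D := [set z | E (x, x) (z, z)].
have diagD : diag D = [set q | E (x, x) q].
  apply/setP => q; rewrite !inE; apply/andP/idP => [[/eqP qq]|xq].
    by case: q qq => q1 q2 /= <-.
  have /eqP qq : q.1 == q.2 by rewrite -(wl_diag xq) eqxx.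
  by split; [rewrite qq | case: q qq xq => q1 q2 /= ->].
have : D \in fibers wl_classes.
  by rewrite inE diagD; apply/imsetP; exists (x, x) => //; apply/setP => q; rewrite !inE.
rewrite fibers_classes => /imsetP[s sS Ds].
have bxs : (b, x) \in s.
  have : x \in D by rewrite inE wl_refl.
  by rewrite Ds inE.
have su : s = u by rewrite -(pblock_of partS sS bxs) (pblock_of partS uS bx).
suff : y \in D by rewrite inE.
by rewrite Ds inE su.
Qed.

Lemma cc_aut_fix2_wl g x : g \in cc_aut S -> g b = b -> x != b -> g x = x -> g = 1%g.
Proof.
move=> autg gb xb gx; apply/permP => y; rewrite perm1.
by apply/esym/(wl_row_inj xb); have := wl_aut n (x, y) autg gb; rewrite /= gx.
Qed.

(* The automorphism sends [z] to the unique [w] with [(x, z) ~ (y, w)]. *)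
Lemma wl_diag_aut x y : x != b -> y != b -> E (x, x) (y, y) ->
  exists2 g, g \in cc_aut S & g b = b /\ g x = y.
Proof.
move=> xb yb xy; pose f z := odflt z [pick w | E (x, z) (y, w)].
have fP z : E (x, z) (y, f z).
  rewrite /f; case: pickP => [w //|none].
  by have [w /andP[xw _]] := wl_extend z xy; rewrite none in xw.
have f_inj : injective f.
  move=> z z' fzz'; apply: (wl_row_inj xb); apply: wl_trans (fP z) _.
  by rewrite fzz'; apply/wl_sym.
have f_hom z1 z2 : E (z1, z2) (f z1, f z2).
  have [w /andP[xw zw]] := wl_extend z1 (fP z2).
  by rewrite (wl_row_inj yb (wl_trans (wl_sym (fP z1)) xw)).
exists (perm f_inj); last split; rewrite ?permE //.
- rewrite inE; apply/forallP => p; rewrite !permE.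
  by rewrite -(wl_pblock (f_hom p.1 p.2)) -surjective_pairing.
- by apply/eqP; rewrite -(wl_snd_b (fP b)) eqxx.
- exact/esym/(wl_row_inj yb)/(wl_trans (wl_sym xy) (fP x)).
Qed.

Lemma cc_aut_stab_trans_wl u x y : u \in S -> (b, x) \in u -> (b, y) \in u ->
  exists2 g, g \in cc_aut S & g b = b /\ g x = y.
Proof.
move=> uS bx byy; have [xb|xb] := eqVneq x b.
  rewrite xb in bx; rewrite xb (scheme_diag_rel schS uS bx byy).
  by exists 1%g; rewrite ?group1 ?perm1.
have [yb|yb] := eqVneq y b.
  by rewrite yb in byy; rewrite (scheme_diag_rel schS uS byy bx) eqxx in xb.
exact: wl_diag_aut xb yb (wl_same_relation_diag uS bx byy).
Qed.

End StableRefinement.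

(* Nonidentity stabilizer elements of distinct points are distinct, so
   [#|T| (k - 1) <= #|G| - 1]; two disjoint orbits of size [#|G| / k] would make this fail. *)
Lemma transitive_of_equal_stabilizers (T : finType) (G : {group {perm T}}) k a b :
  1 < k -> (forall x, #|'C_G[x | 'P]%g| = k) ->
  (forall g x y, g \in G -> x != y -> g x = x -> g y = y -> g = 1%g) ->
  b \in orbit 'P G a.
Proof.
move=> k_gt1 stabG fix2; apply: contraT => b_out.
have orbit_card x : #|orbit 'P G x| * k = #|G| by rewrite -(stabG x) card_orbit_stab.
have disj : [disjoint orbit 'P G a & orbit 'P G b].
  apply/pred0P => z /=; apply/andP => -[za zb]; case/negP: b_out.
  by rewrite -(orbit_eqP za) (orbit_eqP zb) orbit_refl.
have orbits_le : #|orbit 'P G a| + #|orbit 'P G b| <= #|T|.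
  have [_] := leq_card_setU (orbit 'P G a) (orbit 'P G b).
  by rewrite disj => /eqP <-; apply: max_card.
set Q := [set xg : T * {perm T} | xg.2 \in 'C_G[xg.1 | 'P]%g :\ 1%g].
have cardQ : #|Q| = #|T| * (k - 1).
  rewrite -sum1dep_card.
  rewrite (eq_bigl (fun xg => xpredT xg.1 && (xg.2 \in 'C_G[xg.1 | 'P]%g :\ 1%g))) //.
  rewrite -(pair_big_dep xpredT (fun x g => g \in 'C_G[x | 'P]%g :\ 1%g) (fun _ _ => 1)).
  rewrite -sum_nat_const; apply: eq_bigr => x _.
  rewrite sum1dep_card -(stabG x) (cardsD1 1%g 'C_G[x | 'P]%g) group1 add1n subn1 /=.
  by apply: eq_card => g; rewrite inE.
have fixed x g : g \in 'C_G[x | 'P]%g -> g x = x by case/setIP => _ /astab1P.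
have inQ x g : ((x, g) \in Q) = (g != 1%g) && (g \in 'C_G[x | 'P]%g).
  by rewrite in_set in_setD1.
have leQ : #|Q| <= #|G :\ 1%g|.
  rewrite -(@card_in_imset _ _ snd) => [|[x g] [y h]]; last first.
    rewrite !inQ => /andP[g1 gx] /andP[_ hy] /= gh; subst h.
    have [-> //|xy] := eqVneq x y.
    have gG : g \in G by case/setIP: gx.
    by rewrite (fix2 g x y gG xy (fixed _ _ gx) (fixed _ _ hy)) eqxx in g1.
  apply/subset_leq_card/subsetP => _ /imsetP[[x g] + ->].
  by rewrite inQ in_setD1 => /andP[-> /setIP[]].
have cardG : #|G :\ 1%g| = #|G| - 1 by rewrite [in RHS](cardsD1 1%g G) group1 addKn.
rewrite cardQ cardG in leQ; have := leq_trans (leq_mul orbits_le (leqnn (k - 1))) leQ.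
move: (orbit_card a) (orbit_card b) (cardG_gt0 G); nia.
Qed.

Section Frobenius.
Variables (T : finType) (S : {set {set T * T}}).
Hypothesis schS : scheme S.
Hypothesis extH : forall a R, alpha_extension S a R ->
  semiregular_off R a /\ fibers R = [set nbhd a s | s in S].

Local Notation G := (cc_aut_group S).
Local Notation partS := (scheme_partition schS).

Lemma cc_aut_fix2 g b x : g \in cc_aut S -> g b = b -> x != b -> g x = x -> g = 1%g.
Proof.
move=> autg gb xb gx; have [n stable] := wl_stabilizes S b.
have [semireg _] := extH (wl_alpha_extension schS stable).
exact: (cc_aut_fix2_wl schS stable semireg autg gb xb gx).
Qed.

Lemma cc_aut_stab_trans b u x y : u \in S -> (b, x) \in u -> (b, y) \in u ->
  exists2 g, g \in cc_aut S & g b = b /\ g x = y.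
Proof.
move=> uS bx byy; have [n stable] := wl_stabilizes S b.
have [semireg fib] := extH (wl_alpha_extension schS stable).
exact: (cc_aut_stab_trans_wl schS stable semireg fib uS bx byy).
Qed.

Lemma cc_aut_stabE g b : (g \in 'C_G[b | 'P]%g) = (g \in cc_aut S) && (g b == b).
Proof. by rewrite !inE sub1set inE. Qed.

Lemma cc_aut_stab_card b s x : s \in S -> (b, x) \in s -> x != b ->
  #|'C_G[b | 'P]%g| = #|nbhd b s|.
Proof.
move=> sS bx xb; rewrite -(@card_in_imset _ _ (fun g : {perm T} => g x)) => [|g h]; last first.
  rewrite !cc_aut_stabE => /andP[autg /eqP gb] /andP[auth /eqP hb] /= gxhx.
  apply/eqP; rewrite eq_mulgV1; apply/eqP.
  apply: (cc_aut_fix2 (b := b) (x := x)); rewrite ?groupM ?groupV //.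
    by rewrite permM gb -{1}hb permK.
  by rewrite permM gxhx permK.
apply: eq_card => z; apply/imsetP/idP => [[g + ->]|].
  rewrite cc_aut_stabE => /andP[autg /eqP gb].
  by rewrite inE -{1}gb (cc_aut_mem partS autg sS bx).
rewrite inE => bz; have [g autg [gb gx]] := cc_aut_stab_trans sS bx bz.
by exists g; rewrite // cc_aut_stabE autg gb eqxx.
Qed.

Section LargeValency.
Variables (a : T) (s : {set T * T}).
Hypotheses (sS : s \in S) (s_large : 1 < #|nbhd a s|).

Lemma cc_aut_stab_card_const b : #|'C_G[b | 'P]%g| = #|nbhd a s|.
Proof.
have large_b : 1 < #|nbhd b s| by rewrite (scheme_valency schS b a sS).
have [x [y [bx byy xy]]] := card_gt1P large_b.
rewrite (scheme_valency schS a b sS); rewrite !inE in bx byy.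
have [xb|xb] := eqVneq x b; last exact: cc_aut_stab_card sS bx xb.
by apply: cc_aut_stab_card sS byy _; rewrite -xb eq_sym.
Qed.

Lemma cc_aut_transitive x y : y \in orbit 'P G x.
Proof.
apply: transitive_of_equal_stabilizers s_large cc_aut_stab_card_const _.
by move=> g u v autg uv gu gv; apply: cc_aut_fix2 autg gu _ gv; rewrite eq_sym.
Qed.

Lemma cc_aut_orbital p : [set ((g : {perm T}) p.1, g p.2) | g in G] = pblock S p.
Proof.
apply/setP => q; apply/imsetP/idP => [[g autg ->]|qp].
  by rewrite -(cc_autP p autg) (pblock_refl partS).
have /orbitP[g1 autg1 g1p] := cc_aut_transitive p.1 q.1.
have {}g1p : g1 p.1 = q.1 := g1p.
have qg1p : (q.1, g1 p.2) \in pblock S p.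
  by rewrite -g1p -(cc_autP p autg1) (pblock_refl partS).
rewrite [q]surjective_pairing in qp.
have [h auth [hq hg1p]] := cc_aut_stab_trans (pblock_in partS p) qg1p qp.
by exists (g1 * h)%g; rewrite ?groupM // !permM g1p hq hg1p -surjective_pairing.
Qed.

Lemma frobenius_of_large_valency : frobenius_scheme S.
Proof.
exists G; split.
- split.
  + by apply/imsetP; exists a => //; apply/setP => z; rewrite in_setT cc_aut_transitive.
  + have [x [y [ax ay xy]]] := card_gt1P s_large; rewrite !inE in ax ay.
    have [g autg [ga gx]] := cc_aut_stab_trans sS ax ay.
    exists g => //; split; last by exists a.
    by apply: contraNneq xy => g1; rewrite -gx g1 perm1.
  + by move=> g x y autg xy gx gy; apply: cc_aut_fix2 autg gx _ gy; rewrite eq_sym.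
- apply/setP => u; apply/idP/imsetP => [uS|[p _ ->]]; last first.
    by rewrite cc_aut_orbital (pblock_in partS).
  have [p pu] : exists p, p \in u.
    by apply/set0Pn; apply: contraTneq uS => ->; case/and3P: partS.
  by exists p; rewrite // cc_aut_orbital (pblock_of partS uS pu).
Qed.

End LargeValency.
End Frobenius.

Theorem theorem6p1 (T : finType) (S : {set {set T * T}}) :
  scheme S ->
  (forall (a : T) (R : {set {set T * T}}), alpha_extension S a R ->
     semiregular_off R a /\ fibers R = [set nbhd a s | s in S]) ->
  regular_scheme S \/ frobenius_scheme S.
Proof.
move=> schS extH.
have [/existsP[a /existsP[s /andP[sS s_large]]]|small] :=
  boolP [exists a, [exists s, (s \in S) && (1 < #|nbhd a s|)]].
  by right; apply: frobenius_of_large_valency sS s_large.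
left; split=> // a s sS; rewrite leqNgt; apply: contra small => s_large.
by apply/existsP; exists a; apply/existsP; exists s; rewrite sS.
Qed.
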